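(* Let $V_1\subseteq\mathbb{Z}^2$ be infinite and connected with $V_1^c=\mathbb{Z}^2\setminus V_1$ infinite and connected. Let $F=\{\{x,y\}\in\mathcal{E}^2:x\in V_1,y\in V_1^c\}$ be its edge boundary and $F^*$ the set of dual edges of edges in $F$. Then $F^*$ consists of a single doubly infinite dual path which is non-self-intersecting: writing $W^*$ for the set of endpoints of dual edges in $F^*$, the graph $G^*=(W^*,F^* )$ is connected and infinite, and every $v^*\in W^*$ has degree exactly $2$ in $G^*$.
   Context: Connectedness of subsets of $\mathbb{Z}^2$ is with respect to the nearest-neighbour lattice $(\mathbb{Z}^2,\mathcal{E}^2)$. The dual lattice has vertex set $\mathbb{Z}^2+(1/2,1/2)$ and edge set $\mathcal{E}^2+(1/2,1/2)$; the dual edge $e^*$ of $e\in\mathcal{E}^2$ is the unique dual edge bisecting $e$. *)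

From Stdlib Require Import ZArith List Relations.
Open Scope Z_scope.

Definition pt := (Z * Z)%type.

Definition adj (x y : pt) : Prop :=
  Z.abs (fst x - fst y) + Z.abs (snd x - snd y) = 1.

Definition infinite_set (A : pt -> Prop) : Prop :=
  forall l : list pt, exists x, A x /\ ~ In x l.

Definition reach (E : pt -> pt -> Prop) : pt -> pt -> Prop :=
  clos_refl_trans pt E.

Definition connected_set (A : pt -> Prop) : Prop :=
  forall x y, A x -> A y -> reach (fun u v => A u /\ A v /\ adj u v) x y.

Definition compl (A : pt -> Prop) : pt -> Prop := fun x => ~ A x.

(* Dual lattice: the dual vertex u + (1/2,1/2) is ENCODED by u : Z*Z.
   Dual edges are {u,v} with adj u v (i.e. E^2 + (1/2,1/2)).
   The dual edge {u,v} bisects the primal edge {x,y} iff they have the same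
   midpoint: (u+v)/2 + (1/2,1/2) = (x+y)/2, i.e. u + v + (1,1) = x + y. *)
Definition bisects (x y u v : pt) : Prop :=
  adj x y /\ adj u v /\
  fst u + fst v + 1 = fst x + fst y /\ snd u + snd v + 1 = snd x + snd y.

Definition dual_boundary (V1 : pt -> Prop) (u v : pt) : Prop :=
  exists x y, V1 x /\ ~ V1 y /\ adj x y /\ bisects x y u v.

Definition dual_endpoints (V1 : pt -> Prop) (u : pt) : Prop :=
  exists v, dual_boundary V1 u v \/ dual_boundary V1 v u.

Definition degree_two (E : pt -> pt -> Prop) (u : pt) : Prop :=
  exists v1 v2, v1 <> v2 /\
    forall v, (E u v \/ E v u) <-> (v = v1 \/ v = v2).

From Stdlib Require Import ZArith List Relations Lia Bool Classical ClassicalEpsilon.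
Open Scope Z_scope.

(* Fix a dual vertex [u] of [F^*].  The edges of [F] whose dual lies in the component of
   [u] form a closed mod-2 cochain on [Z^2], hence the coboundary of a 0/1 potential [f].
   Since [V1] and its complement are connected, [f] is constant on each of them, and it
   jumps across the edge at [u]; so it jumps across every edge of [F], i.e. all of [F^*]
   lies in the component of [u].  A dual vertex sees an even number of edges of [F^*];
   four would be a checkerboard square whose diagonal corners are joined by disjoint
   paths in [V1] and in [V1^c].  Closing the first path by the square's corner gives a
   set of unit squares whose indicator is constant along the second path, yet differs on
   both sides of its last step.  Finally, if [F^*] were finite, [V1] would be constant
   far from the origin, contradicting that both [V1] and its complement are infinite. *)

Lemma pair_eq (a b c d : Z) : (a, b) = (c, d) <-> a = c /\ b = d.
Proof. split; [intro H; injection H; auto | intros [-> ->]; reflexivity]. Qed.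

Lemma adj_cases (p1 p2 q1 q2 : Z) : adj (p1, p2) (q1, q2) ->
  (q1 = p1 + 1 /\ q2 = p2) \/ (q1 = p1 - 1 /\ q2 = p2) \/
  (q1 = p1 /\ q2 = p2 + 1) \/ (q1 = p1 /\ q2 = p2 - 1).
Proof. unfold adj; simpl; lia. Qed.

Ltac destruct_adj H :=
  apply adj_cases in H; destruct H as [[-> ->]|[[-> ->]|[[-> ->]|[-> ->]]]].

Definition same_edge (c d x y : pt) : Prop := (c = x /\ d = y) \/ (c = y /\ d = x).

Lemma bisects_iff (c d : pt) (p1 p2 : Z) (q : pt) : bisects c d (p1, p2) q <->
  (q = (p1 + 1, p2) /\ same_edge c d (p1 + 1, p2) (p1 + 1, p2 + 1)) \/
  (q = (p1 - 1, p2) /\ same_edge c d (p1, p2) (p1, p2 + 1)) \/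
  (q = (p1, p2 + 1) /\ same_edge c d (p1, p2 + 1) (p1 + 1, p2 + 1)) \/
  (q = (p1, p2 - 1) /\ same_edge c d (p1, p2) (p1 + 1, p2)).
Proof.
  destruct c as [c1 c2], d as [d1 d2], q as [q1 q2]; unfold same_edge; rewrite !pair_eq.
  split.
  - intros (Hcd & Hpq & E1 & E2); simpl in E1, E2.
    destruct_adj Hcd; destruct_adj Hpq; lia.
  - intro H; unfold bisects, adj; simpl; repeat split; lia.
Qed.

Lemma bisects_dual_unique (c d p q p' q' : pt) :
  bisects c d p q -> bisects c d p' q' -> same_edge p' q' p q.
Proof.
  destruct c as [c1 c2], d as [d1 d2], p as [p1 p2], q as [q1 q2], p' as [r1 r2], q' as [s1 s2].
  rewrite !bisects_iff; unfold same_edge; rewrite !pair_eq; lia.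
Qed.

Lemma bisects_flip (c d p q : pt) : bisects c d p q -> bisects c d q p.
Proof. unfold bisects, adj; intros; lia. Qed.

Lemma bisects_swap (c d p q : pt) : bisects c d p q -> bisects d c p q.
Proof. unfold bisects, adj; intros; lia. Qed.

Definition separates (V1 : pt -> Prop) (c d : pt) : Prop :=
  (V1 c /\ ~ V1 d) \/ (V1 d /\ ~ V1 c).

Lemma separates_sym (V1 : pt -> Prop) (c d : pt) : separates V1 c d -> separates V1 d c.
Proof. unfold separates; tauto. Qed.

Lemma dual_boundary_separates (V1 : pt -> Prop) (p q : pt) :
  dual_boundary V1 p q <-> exists c d, bisects c d p q /\ separates V1 c d.
Proof.
  split.
  - intros (x & y & Hx & Hy & _ & Hb). exists x, y; unfold separates; tauto.
  - intros (c & d & Hb & [[Hc Hd]|[Hd Hc]]).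
    + exists c, d; repeat split; auto; apply Hb.
    + pose proof (bisects_swap _ _ _ _ Hb) as Hb'.
      exists d, c; repeat split; auto; apply Hb'.
Qed.

Lemma dual_boundary_iff (V1 : pt -> Prop) (p1 p2 : Z) (q : pt) :
  dual_boundary V1 (p1, p2) q <->
  (q = (p1 + 1, p2) /\ separates V1 (p1 + 1, p2) (p1 + 1, p2 + 1)) \/
  (q = (p1 - 1, p2) /\ separates V1 (p1, p2) (p1, p2 + 1)) \/
  (q = (p1, p2 + 1) /\ separates V1 (p1, p2 + 1) (p1 + 1, p2 + 1)) \/
  (q = (p1, p2 - 1) /\ separates V1 (p1, p2) (p1 + 1, p2)).
Proof.
  rewrite dual_boundary_separates. split.
  - intros (c & d & Hb & Hs); rewrite bisects_iff in Hb; unfold same_edge in Hb.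
    destruct Hb as [[-> H]|[[-> H]|[[-> H]|[-> H]]]];
      destruct H as [[-> ->]|[-> ->]]; unfold separates in *; tauto.
  - intros [[-> H]|[[-> H]|[[-> H]|[-> H]]]]; eexists _, _;
      (split; [rewrite bisects_iff; unfold same_edge; intuition fail|exact H]).
Qed.

Lemma dual_boundary_sym (V1 : pt -> Prop) (p q : pt) :
  dual_boundary V1 p q -> dual_boundary V1 q p.
Proof.
  rewrite !dual_boundary_separates. intros (c & d & Hb & Hs).
  exists c, d; auto using bisects_flip.
Qed.

Definition bool_of (P : Prop) : bool := if excluded_middle_informative P then true else false.

Lemma bool_of_true (P : Prop) : bool_of P = true <-> P.
Proof. unfold bool_of; destruct (excluded_middle_informative P); intuition discriminate. Qed.

Lemma bool_of_ext (P Q : Prop) : (P <-> Q) -> bool_of P = bool_of Q.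
Proof. intro H; apply eq_true_iff_eq; rewrite !bool_of_true; exact H. Qed.

Lemma separates_xorb (V1 : pt -> Prop) (c d : pt) :
  separates V1 c d <-> xorb (bool_of (V1 c)) (bool_of (V1 d)) = true.
Proof.
  unfold separates, bool_of.
  destruct (excluded_middle_informative (V1 c)), (excluded_middle_informative (V1 d));
    simpl; intuition discriminate.
Qed.

Fixpoint xsum_from (g : Z -> bool) (s : Z) (k : nat) : bool :=
  match k with O => false | S k => xorb (xsum_from g s k) (g (s + Z.of_nat k)) end.

Lemma xsum_from_shift (g : Z -> bool) (s : Z) (k : nat) :
  xsum_from g s (S k) = xorb (g s) (xsum_from g (s + 1) k).
Proof.
  revert s; induction k as [|k IH]; intro s.
  - simpl; rewrite Z.add_0_r, xorb_false_r; reflexivity.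
  - change (xsum_from g s (S (S k))) with (xorb (xsum_from g s (S k)) (g (s + Z.of_nat (S k)))).
    rewrite IH; simpl xsum_from.
    replace (s + Z.of_nat (S k)) with (s + 1 + Z.of_nat k) by lia.
    rewrite xorb_assoc; reflexivity.
Qed.

Definition xsum (g : Z -> bool) (n : Z) : bool :=
  if 0 <=? n then xsum_from g 0 (Z.to_nat n) else xsum_from g n (Z.to_nat (- n)).

Lemma xsum_succ (g : Z -> bool) (n : Z) : xsum g (n + 1) = xorb (xsum g n) (g n).
Proof.
  unfold xsum; destruct (Z.leb_spec 0 n), (Z.leb_spec 0 (n + 1)); try lia.
  - replace (Z.to_nat (n + 1)) with (S (Z.to_nat n)) by lia; simpl.
    rewrite Z2Nat.id by lia; reflexivity.
  - replace n with (-1) by lia; simpl; destruct (g (-1)); reflexivity.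
  - replace (Z.to_nat (- n)) with (S (Z.to_nat (- (n + 1)))) by lia.
    rewrite xsum_from_shift, xorb_comm, <- xorb_assoc, xorb_nilpotent; reflexivity.
Qed.

Lemma Z_ind_iff (P : Z -> Prop) : P 0 -> (forall n, P n <-> P (n + 1)) -> forall n, P n.
Proof.
  intros H0 HS; apply Z.bi_induction;
    [intros x y ->; reflexivity | exact H0 | intro n; rewrite <- Z.add_1_r; apply HS].
Qed.

(* [cv i j] lives on the vertical edge from [(i, j)] to [(i, j + 1)], [ch i j] on the
   horizontal edge from [(i, j)] to [(i + 1, j)]; the hypothesis says that the values
   around every unit square XOR to [false]. *)
Lemma closed_cochain_exact (cv ch : Z -> Z -> bool) :
  (forall i j, xorb (xorb (ch i j) (cv (i + 1) j)) (xorb (ch i (j + 1)) (cv i j)) = false) ->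
  exists f : pt -> bool, forall i j,
    f (i, j + 1) = xorb (f (i, j)) (cv i j) /\ f (i + 1, j) = xorb (f (i, j)) (ch i j).
Proof.
  intro Hclosed.
  exists (fun p => xorb (xsum (fun k => ch k 0) (fst p)) (xsum (cv (fst p)) (snd p))).
  intros i j; simpl; split.
  - rewrite xsum_succ, xorb_assoc; reflexivity.
  - assert (Hcol : forall j, xorb (xsum (cv (i + 1)) j) (xsum (cv i) j) = xorb (ch i 0) (ch i j)).
    { apply Z_ind_iff.
      - unfold xsum; simpl; destruct (ch i 0); reflexivity.
      - intro n; rewrite !xsum_succ; specialize (Hclosed i n).
        destruct (xsum (cv (i + 1)) n), (xsum (cv i) n), (ch i 0), (ch i n),
          (cv (i + 1) n), (cv i n), (ch i (n + 1)); simpl in *; intuition congruence. }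
    rewrite xsum_succ; specialize (Hcol j).
    destruct (xsum (fun k => ch k 0) i), (ch i 0), (xsum (cv (i + 1)) j),
      (xsum (cv i) j), (ch i j); simpl in *; congruence.
Qed.

Lemma square_sides_bisect (i j : Z) :
  bisects (i, j) (i + 1, j) (i, j) (i, j - 1) /\
  bisects (i + 1, j) (i + 1, j + 1) (i, j) (i + 1, j) /\
  bisects (i, j + 1) (i + 1, j + 1) (i, j) (i, j + 1) /\
  bisects (i, j) (i, j + 1) (i, j) (i - 1, j).
Proof. unfold bisects, adj; simpl; repeat split; lia. Qed.

Section BoundaryComponent.

Variables (V1 : pt -> Prop) (u : pt).

Definition crossed (c d : pt) : Prop :=
  separates V1 c d /\ exists p q, bisects c d p q /\ reach (dual_boundary V1) u p.

Lemma crossed_sym (c d : pt) : crossed c d -> crossed d c.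
Proof.
  intros [Hs (p & q & Hb & Hr)]; split; eauto using separates_sym, bisects_swap.
Qed.

Lemma crossed_iff (c d p q : pt) : bisects c d p q ->
  crossed c d <-> separates V1 c d /\ reach (dual_boundary V1) u p.
Proof.
  intro Hb; split; [|intros [Hs Hr]; split; eauto].
  intros [Hs (p' & q' & Hb' & Hr)]; split; [exact Hs|].
  destruct (bisects_dual_unique _ _ _ _ _ _ Hb Hb') as [[-> _]|[-> ->]]; [exact Hr|].
  apply rt_trans with q; [exact Hr|]. apply rt_step, dual_boundary_separates.
  exists c, d; auto using bisects_flip.
Qed.

Lemma bool_of_crossed (c d p q : pt) : bisects c d p q ->
  bool_of (crossed c d) =
  xorb (bool_of (V1 c)) (bool_of (V1 d)) && bool_of (reach (dual_boundary V1) u p).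
Proof.
  intro Hb; apply eq_true_iff_eq.
  rewrite andb_true_iff, bool_of_true, bool_of_true, <- separates_xorb.
  exact (crossed_iff _ _ _ _ Hb).
Qed.

Definition crossed_vert (i j : Z) : bool := bool_of (crossed (i, j) (i, j + 1)).
Definition crossed_horiz (i j : Z) : bool := bool_of (crossed (i, j) (i + 1, j)).

(* Around a unit square the four crossed values are either all [false] or the
   indicators of the four sides separating [V1], and the latter XOR to [false]. *)
Lemma crossed_closed (i j : Z) :
  xorb (xorb (crossed_horiz i j) (crossed_vert (i + 1) j))
       (xorb (crossed_horiz i (j + 1)) (crossed_vert i j)) = false.
Proof.
  destruct (square_sides_bisect i j) as (Hd & Hr & Hu & Hl).
  unfold crossed_horiz, crossed_vert.
  rewrite (bool_of_crossed _ _ _ _ Hd), (bool_of_crossed _ _ _ _ Hr),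
    (bool_of_crossed _ _ _ _ Hu), (bool_of_crossed _ _ _ _ Hl).
  destruct (bool_of (V1 (i, j))), (bool_of (V1 (i + 1, j))), (bool_of (V1 (i + 1, j + 1))),
    (bool_of (V1 (i, j + 1))), (bool_of (reach (dual_boundary V1) u (i, j))); reflexivity.
Qed.

Section Potential.

Variable f : pt -> bool.
Hypothesis f_jumps : forall i j,
  f (i, j + 1) = xorb (f (i, j)) (crossed_vert i j) /\
  f (i + 1, j) = xorb (f (i, j)) (crossed_horiz i j).

Lemma potential_jump (c d : pt) : adj c d -> xorb (f c) (f d) = bool_of (crossed c d).
Proof.
  destruct c as [c1 c2], d as [d1 d2]; intro Hcd; destruct_adj Hcd.
  - rewrite (proj2 (f_jumps c1 c2)), <- xorb_assoc, xorb_nilpotent; reflexivity.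
  - destruct (f_jumps (c1 - 1) c2) as [_ E]; replace (c1 - 1 + 1) with c1 in E by lia.
    unfold crossed_horiz in E; replace (c1 - 1 + 1) with c1 in E by lia.
    rewrite E, xorb_comm, <- xorb_assoc, xorb_nilpotent, xorb_false_l.
    apply bool_of_ext; split; apply crossed_sym.
  - rewrite (proj1 (f_jumps c1 c2)), <- xorb_assoc, xorb_nilpotent; reflexivity.
  - destruct (f_jumps c1 (c2 - 1)) as [E _]; replace (c2 - 1 + 1) with c2 in E by lia.
    unfold crossed_vert in E; replace (c2 - 1 + 1) with c2 in E by lia.
    rewrite E, xorb_comm, <- xorb_assoc, xorb_nilpotent, xorb_false_l.
    apply bool_of_ext; split; apply crossed_sym.
Qed.

Lemma potential_const (A : pt -> Prop) (c d : pt) :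
  (forall a b, A a -> A b -> ~ separates V1 a b) ->
  reach (fun a b => A a /\ A b /\ adj a b) c d -> f c = f d.
Proof.
  intros HA H; induction H as [a b (Ha & Hb & Hab)| |]; [|reflexivity|congruence].
  pose proof (potential_jump _ _ Hab) as E.
  destruct (bool_of (crossed a b)) eqn:Ec.
  - rewrite bool_of_true in Ec; destruct (HA a b Ha Hb (proj1 Ec)).
  - destruct (f a), (f b); simpl in E; congruence.
Qed.

End Potential.

Lemma dual_endpoint_edge (p : pt) :
  dual_endpoints V1 p -> exists x y q, V1 x /\ ~ V1 y /\ bisects x y p q.
Proof.
  intros [q Hq]; assert (Hpq : dual_boundary V1 p q) by (destruct Hq; auto using dual_boundary_sym).
  destruct Hpq as (x & y & Hx & Hy & _ & Hb); eauto 6.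
Qed.

Lemma reach_dual_endpoint (w : pt) :
  connected_set V1 -> connected_set (compl V1) ->
  dual_endpoints V1 u -> dual_endpoints V1 w -> reach (dual_boundary V1) u w.
Proof.
  intros C1 C2 Hu Hw.
  destruct (closed_cochain_exact crossed_vert crossed_horiz crossed_closed) as [f Hf].
  destruct (dual_endpoint_edge _ Hu) as (x0 & y0 & q0 & Hx0 & Hy0 & Hb0).
  destruct (dual_endpoint_edge _ Hw) as (x1 & y1 & q1 & Hx1 & Hy1 & Hb1).
  assert (Hx : f x0 = f x1).
  { apply (potential_const _ Hf V1); [unfold separates; tauto | apply C1; auto]. }
  assert (Hy : f y0 = f y1).
  { apply (potential_const _ Hf (compl V1)); [unfold separates, compl; tauto | apply C2; auto]. }
  assert (E0 : xorb (f x0) (f y0) = true).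
  { rewrite (potential_jump _ Hf _ _ (proj1 Hb0)).
    apply bool_of_true, (crossed_iff _ _ _ _ Hb0); split; [left; auto | apply rt_refl]. }
  rewrite Hx, Hy, (potential_jump _ Hf _ _ (proj1 Hb1)), bool_of_true in E0.
  apply (crossed_iff _ _ _ _ Hb1) in E0; apply E0.
Qed.

End BoundaryComponent.

(* [h : pt -> bool] is read as a set of unit squares, [(m, n)] standing for
   [[m, m + 1] x [n, n + 1]]; the vertical edge from [(m, n)] to [(m, n + 1)] and the
   horizontal edge from [(m, n)] to [(m + 1, n)] are on its boundary iff they separate
   two squares of different membership. *)
Definition vert_boundary (h : pt -> bool) (m n : Z) : bool := xorb (h (m - 1, n)) (h (m, n)).
Definition horiz_boundary (h : pt -> bool) (m n : Z) : bool := xorb (h (m, n - 1)) (h (m, n)).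

Definition ray (x : pt) (m n : Z) : bool := (m =? fst x) && (snd x <=? n).

(* The boundary of [h] is, modulo 2, a set of edges inside [A] plus the upward rays
   from [x] and [a]: a path in [A] from [x] to [a] closed up at infinity. *)
Definition fills (A : pt -> Prop) (x a : pt) (h : pt -> bool) : Prop :=
  (forall m n, xorb (vert_boundary h m n) (xorb (ray x m n) (ray a m n)) = true ->
     A (m, n) /\ A (m, n + 1)) /\
  (forall m n, horiz_boundary h m n = true -> A (m, n) /\ A (m + 1, n)).

(* The column of squares above the edge [{a, b}] if it is horizontal, empty otherwise;
   its boundary is [{a, b}] plus the upward rays from [a] and [b]. *)
Definition strip (a b : pt) (p : pt) : bool :=
  negb (fst a =? fst b) && (fst p =? Z.min (fst a) (fst b)) && (snd a <=? snd p).

Ltac decide_Z :=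
  repeat match goal with
  | |- context [?x =? ?y] => destruct (Z.eqb_spec x y)
  | |- context [?x <=? ?y] => destruct (Z.leb_spec x y)
  end; simpl.

Lemma strip_boundary (a b : pt) (m n : Z) : adj a b ->
  (xorb (vert_boundary (strip a b) m n) (xorb (ray a m n) (ray b m n)) = true ->
     same_edge (m, n) (m, n + 1) a b) /\
  (horiz_boundary (strip a b) m n = true -> same_edge (m, n) (m + 1, n) a b).
Proof.
  destruct a as [a1 a2], b as [b1 b2]; intro Hab; destruct_adj Hab;
    unfold vert_boundary, horiz_boundary, strip, ray, same_edge; simpl;
    rewrite ?Z.min_l, ?Z.min_r by lia; rewrite !pair_eq;
    split; decide_Z; intro E; solve [discriminate E | lia].
Qed.

Lemma vert_boundary_xorb (h g : pt -> bool) (m n : Z) :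
  vert_boundary (fun p => xorb (h p) (g p)) m n = xorb (vert_boundary h m n) (vert_boundary g m n).
Proof.
  unfold vert_boundary; destruct (h (m - 1, n)), (h (m, n)), (g (m - 1, n)), (g (m, n));
    reflexivity.
Qed.

Lemma horiz_boundary_xorb (h g : pt -> bool) (m n : Z) :
  horiz_boundary (fun p => xorb (h p) (g p)) m n =
  xorb (horiz_boundary h m n) (horiz_boundary g m n).
Proof.
  unfold horiz_boundary; destruct (h (m, n - 1)), (h (m, n)), (g (m, n - 1)), (g (m, n));
    reflexivity.
Qed.

Lemma xorb_true_cases (b c : bool) : xorb b c = true -> b = true \/ c = true.
Proof. destruct b, c; auto. Qed.

Lemma fills_step (A : pt -> Prop) (x a b : pt) (h : pt -> bool) :
  fills A x a h -> A a -> A b -> adj a b -> fills A x b (fun p => xorb (h p) (strip a b p)).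
Proof.
  intros [Hv Hh] Ha Hb Hab; split; intros m n E.
  - rewrite vert_boundary_xorb in E.
    replace (xorb (xorb (vert_boundary h m n) (vert_boundary (strip a b) m n))
                  (xorb (ray x m n) (ray b m n)))
      with (xorb (xorb (vert_boundary h m n) (xorb (ray x m n) (ray a m n)))
                 (xorb (vert_boundary (strip a b) m n) (xorb (ray a m n) (ray b m n)))) in E
      by (destruct (vert_boundary h m n), (vert_boundary (strip a b) m n),
            (ray x m n), (ray a m n), (ray b m n); reflexivity).
    destruct (xorb_true_cases _ _ E) as [E'|E']; [auto|].
    destruct (proj1 (strip_boundary _ _ m n Hab) E') as [[-> ->]|[-> ->]]; auto.
  - rewrite horiz_boundary_xorb in E.
    destruct (xorb_true_cases _ _ E) as [E'|E']; [auto|].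
    destruct (proj2 (strip_boundary _ _ m n Hab) E') as [[-> ->]|[-> ->]]; auto.
Qed.

Lemma fills_of_path (A : pt -> Prop) (x a : pt) :
  reach (fun u v => A u /\ A v /\ adj u v) x a -> exists h, fills A x a h.
Proof.
  intro P; apply clos_rt_rtn1 in P; induction P as [|b c (Hb & Hc & Hbc) _ [h Hh]].
  - exists (fun _ => false); split; intros m n E;
      unfold vert_boundary, horiz_boundary in E; rewrite ?xorb_nilpotent in E; discriminate E.
  - exists (fun p => xorb (h p) (strip b c p)); exact (fills_step _ _ _ _ _ Hh Hb Hc Hbc).
Qed.

Lemma fills_mono (A A' : pt -> Prop) (x a : pt) (h : pt -> bool) :
  (forall p, A p -> A' p) -> fills A x a h -> fills A' x a h.
Proof.
  intros HA [Hv Hh]; split; intros m n E; [destruct (Hv m n E) | destruct (Hh m n E)]; auto.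
Qed.

Definition flat (h : pt -> bool) (v : pt) : Prop :=
  h (fst v - 1, snd v - 1) = h v /\ h (fst v, snd v - 1) = h v /\ h (fst v - 1, snd v) = h v.

Lemma fills_loop_flat (A : pt -> Prop) (x v : pt) (h : pt -> bool) :
  fills A x x h -> ~ A v -> flat h v.
Proof.
  destruct v as [m n]; intros [Hv Hh] Hm; unfold flat; simpl.
  assert (Hv' : forall m n, vert_boundary h m n = false -> h (m - 1, n) = h (m, n))
    by (intros; apply xorb_eq; assumption).
  assert (Hh' : forall m n, horiz_boundary h m n = false -> h (m, n - 1) = h (m, n))
    by (intros; apply xorb_eq; assumption).
  assert (Vup : vert_boundary h m n = false).
  { destruct (vert_boundary h m n) eqn:E; [|reflexivity].
    destruct Hm; apply (Hv m n); rewrite E, xorb_nilpotent; reflexivity. }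
  assert (Vdown : vert_boundary h m (n - 1) = false).
  { destruct (vert_boundary h m (n - 1)) eqn:E; [|reflexivity].
    pose proof (Hv m (n - 1)) as H; replace (n - 1 + 1) with n in H by lia.
    destruct Hm; apply H; rewrite E, xorb_nilpotent; reflexivity. }
  assert (Hright : horiz_boundary h m n = false).
  { destruct (horiz_boundary h m n) eqn:E; [|reflexivity]. destruct Hm; apply (Hh m n E). }
  assert (Hleft : horiz_boundary h (m - 1) n = false).
  { destruct (horiz_boundary h (m - 1) n) eqn:E; [|reflexivity].
    pose proof (Hh (m - 1) n E) as H; replace (m - 1 + 1) with m in H by lia; tauto. }
  apply Hv' in Vup; apply Hv' in Vdown; apply Hh' in Hright; apply Hh' in Hleft.
  repeat split; congruence.
Qed.

Lemma flat_adj_eq (h : pt -> bool) (c d : pt) : flat h c -> flat h d -> adj c d -> h c = h d.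
Proof.
  destruct c as [c1 c2], d as [d1 d2]; unfold flat; simpl; intros Fc Fd Hcd;
    destruct_adj Hcd; rewrite ?Z.add_simpl_r in *; intuition congruence.
Qed.

(* Closing the path from [(i, j)] to [(i + 1, j + 1)] through the corner [(i, j + 1)]
   cancels the two rays; as the corner is not in [A], the boundary of [h0] next to it is
   just the ray from [(i, j)], which fixes the jumps of the closed filling there. *)
Lemma fills_close_corner (A : pt -> Prop) (i j : Z) (h0 : pt -> bool) :
  fills A (i, j) (i + 1, j + 1) h0 -> A (i, j) -> A (i + 1, j + 1) -> ~ A (i, j + 1) ->
  exists h, fills (fun p => A p \/ p = (i, j + 1)) (i, j) (i, j) h /\
    h (i - 1, j) <> h (i, j) /\ h (i, j) <> h (i, j + 1).
Proof.
  intros H0 Ax Aa Nb.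
  set (h1 := fun p => xorb (h0 p) (strip (i + 1, j + 1) (i, j + 1) p)).
  set (h := fun p => xorb (h1 p) (strip (i, j + 1) (i, j) p)).
  exists h; split; [|split].
  - apply fills_step; [apply fills_step| | |]; unfold adj; simpl; auto; try lia.
    apply (fills_mono A); auto.
  - assert (V0 : vert_boundary h0 i j = true).
    { destruct (vert_boundary h0 i j) eqn:E; [reflexivity|exfalso].
      apply Nb, (proj1 H0 i j).
      rewrite E; unfold ray; simpl; decide_Z; (reflexivity || lia). }
    assert (V : vert_boundary h i j = true).
    { unfold h, h1; rewrite !vert_boundary_xorb, V0.
      unfold vert_boundary, strip; simpl; rewrite Z.min_r, Z.min_l by lia.
      decide_Z; (reflexivity || lia). }
    unfold vert_boundary in V; intro E; rewrite E, xorb_nilpotent in V; discriminate V.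
  - assert (H0h : horiz_boundary h0 i (j + 1) = false).
    { destruct (horiz_boundary h0 i (j + 1)) eqn:E; [exfalso|reflexivity].
      exact (Nb (proj1 (proj2 H0 i (j + 1) E))). }
    assert (Hb : horiz_boundary h i (j + 1) = true).
    { unfold h, h1; rewrite !horiz_boundary_xorb, H0h.
      unfold horiz_boundary, strip; simpl; rewrite Z.min_r, Z.min_l by lia.
      decide_Z; (reflexivity || lia). }
    unfold horiz_boundary in Hb; rewrite Z.add_simpl_r in Hb.
    intro E; rewrite E, xorb_nilpotent in Hb; discriminate Hb.
Qed.

Lemma diagonal_paths_meet (A B : pt -> Prop) (i j : Z) :
  (forall p, A p -> ~ B p) ->
  A (i, j) -> A (i + 1, j + 1) -> B (i + 1, j) -> B (i, j + 1) ->
  reach (fun u v => A u /\ A v /\ adj u v) (i, j) (i + 1, j + 1) ->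
  reach (fun u v => B u /\ B v /\ adj u v) (i + 1, j) (i, j + 1) -> False.
Proof.
  intros AB Ax Aa Bb0 Bb1 PA PB.
  destruct (fills_of_path _ _ _ PA) as [h0 H0].
  destruct (fills_close_corner _ _ _ _ H0 Ax Aa (fun Ab1 => AB _ Ab1 Bb1))
    as (h & Hloop & Jv & Jh).
  assert (Flat : forall c, B c -> c <> (i, j + 1) -> flat h c).
  { intros c Bc Hc; apply (fills_loop_flat _ _ _ _ Hloop).
    intros [Ac|Ec]; [exact (AB c Ac Bc) | exact (Hc Ec)]. }
  (* [h] is constant along the path in [B], but the last step of that path leaves a
     square on which [h] differs from [h (i, j)]. *)
  assert (Inv : forall c, clos_refl_trans_n1 _ (fun u v => B u /\ B v /\ adj u v) (i + 1, j) c ->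
                  c <> (i, j + 1) /\ B c /\ h c = h (i, j)).
  { intros c P; induction P as [|c c' (Bc & Bc' & Hcc') _ (Hc & _ & IH)].
    - split; [rewrite pair_eq; lia | split; [exact Bb0|]].
      destruct (Flat (i + 1, j) Bb0 ltac:(rewrite pair_eq; lia)) as (_ & _ & F); simpl in F.
      rewrite Z.add_simpl_r in F; congruence.
    - destruct (classic (c' = (i, j + 1))) as [->|Hc'].
      + exfalso; destruct (Flat c Bc Hc) as (_ & F2 & _).
        destruct c as [c1 c2]; simpl in *; apply adj_cases in Hcc'.
        destruct Hcc' as [[E1 E2]|[[E1 E2]|[[E1 E2]|[E1 E2]]]].
        * replace c1 with (i - 1) in * by lia; replace c2 with (j + 1) in * by lia.
          rewrite Z.add_simpl_r in F2; congruence.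
        * replace c1 with (i + 1) in * by lia; replace c2 with (j + 1) in * by lia.
          exact (AB _ Aa Bc).
        * replace c1 with i in * by lia; replace c2 with j in * by lia; exact (AB _ Ax Bc).
        * replace c1 with i in * by lia; replace c2 with (j + 2) in * by lia.
          replace (j + 2 - 1) with (j + 1) in F2 by lia; congruence.
      + split; [exact Hc'|split; [exact Bc'|]].
        rewrite <- IH; symmetry; apply flat_adj_eq; auto. }
  apply clos_rt_rtn1 in PB; destruct (Inv _ PB) as [N _]; exact (N eq_refl).
Qed.

Lemma degree_two_of_neighbours (V1 : pt -> Prop) (p v1 v2 : pt) : v1 <> v2 ->
  (forall v, dual_boundary V1 p v <-> v = v1 \/ v = v2) -> degree_two (dual_boundary V1) p.
Proof.
  intros Hne Hn; exists v1, v2; split; [exact Hne|]; intro v; rewrite <- Hn.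
  split; [intros [H|H]; auto using dual_boundary_sym | auto].
Qed.

Ltac degree_two_by v1 v2 :=
  apply (degree_two_of_neighbours _ _ v1 v2);
  [ rewrite pair_eq; lia
  | intro v; rewrite dual_boundary_iff; unfold separates; split;
      [intros [[-> ?]|[[-> ?]|[[-> ?]|[-> ?]]]] | intros [-> | ->]]; tauto ].

Lemma dual_boundary_degree_two (V1 : pt -> Prop) (p : pt) :
  connected_set V1 -> connected_set (compl V1) ->
  dual_endpoints V1 p -> degree_two (dual_boundary V1) p.
Proof.
  destruct p as [i j]; intros C1 C2 [q Hq].
  assert (Hs : dual_boundary V1 (i, j) q) by (destruct Hq; auto using dual_boundary_sym).
  rewrite dual_boundary_iff in Hs.
  assert (NC1 : ~ (V1 (i, j) /\ V1 (i + 1, j + 1) /\ ~ V1 (i + 1, j) /\ ~ V1 (i, j + 1))).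
  { intros (H1 & H2 & H3 & H4).
    apply (diagonal_paths_meet V1 (compl V1) i j); auto; unfold compl; tauto. }
  assert (NC2 : ~ (~ V1 (i, j) /\ ~ V1 (i + 1, j + 1) /\ V1 (i + 1, j) /\ V1 (i, j + 1))).
  { intros (H1 & H2 & H3 & H4).
    apply (diagonal_paths_meet (compl V1) V1 i j); auto; unfold compl; tauto. }
  destruct (classic (V1 (i, j))), (classic (V1 (i + 1, j))),
    (classic (V1 (i + 1, j + 1))), (classic (V1 (i, j + 1)));
  first
    [ exfalso; unfold separates in Hs; tauto
    | clear Hs NC1 NC2; first
      [ degree_two_by (i + 1, j) (i - 1, j) | degree_two_by (i + 1, j) (i, j + 1)
      | degree_two_by (i + 1, j) (i, j - 1) | degree_two_by (i - 1, j) (i, j + 1)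
      | degree_two_by (i - 1, j) (i, j - 1) | degree_two_by (i, j + 1) (i, j - 1) ] ].
Qed.

Lemma not_separates_iff (V1 : pt -> Prop) (c d : pt) : ~ separates V1 c d -> (V1 c <-> V1 d).
Proof. unfold separates; intro H; destruct (classic (V1 c)), (classic (V1 d)); tauto. Qed.

Lemma non_endpoint_uniform (V1 : pt -> Prop) (m n : Z) : ~ dual_endpoints V1 (m, n) ->
  (V1 (m, n) <-> V1 (m + 1, n)) /\ (V1 (m, n) <-> V1 (m, n + 1)).
Proof.
  intro Hn; split; apply not_separates_iff; intro Hs; apply Hn.
  - exists (m, n - 1); left; apply dual_boundary_iff; tauto.
  - exists (m - 1, n); left; apply dual_boundary_iff; tauto.
Qed.

Definition list_bound (l : list pt) : Z :=
  fold_right (fun p acc => Z.abs (fst p) + Z.abs (snd p) + acc) 0 l.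

Lemma list_bound_nonneg (l : list pt) : 0 <= list_bound l.
Proof. induction l; simpl; lia. Qed.

Lemma list_bound_in (l : list pt) (p : pt) :
  In p l -> Z.abs (fst p) <= list_bound l /\ Z.abs (snd p) <= list_bound l.
Proof.
  induction l as [|a l IH]; simpl; [tauto|].
  pose proof (list_bound_nonneg l); intros [->|Hp]; [lia|]; specialize (IH Hp); lia.
Qed.

Definition window (K : Z) : list Z := map (fun k => Z.of_nat k - K) (seq 0 (Z.to_nat (2 * K))).

Lemma in_window (K a : Z) : Z.abs a < K -> In a (window K).
Proof.
  intro H; apply in_map_iff; exists (Z.to_nat (a + K)); split; [lia|].
  apply in_seq; lia.
Qed.

Lemma dual_endpoints_infinite (V1 : pt -> Prop) :
  infinite_set V1 -> infinite_set (compl V1) -> infinite_set (dual_endpoints V1).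
Proof.
  intros I1 I2 l; apply NNPP; intro Hl.
  set (K := list_bound l + 1).
  assert (Far : forall m n, K <= Z.abs m \/ K <= Z.abs n -> ~ dual_endpoints V1 (m, n)).
  { intros m n HK Hmn; apply Hl; exists (m, n); split; [exact Hmn|intro Hin].
    apply list_bound_in in Hin; simpl in Hin; unfold K in HK; lia. }
  assert (Col : forall m, K <= Z.abs m -> forall n, V1 (m, n) <-> V1 (m, 0)).
  { intros m Hm; apply Z_ind_iff; [tauto|]; intro n.
    destruct (non_endpoint_uniform V1 m n (Far m n (or_introl Hm))); tauto. }
  assert (Row : forall n, K <= Z.abs n -> forall m, V1 (m, n) <-> V1 (0, n)).
  { intros n Hn; apply Z_ind_iff; [tauto|]; intro m.
    destruct (non_endpoint_uniform V1 m n (Far m n (or_intror Hn))); tauto. }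
  assert (Outside : forall m n, K <= Z.abs m \/ K <= Z.abs n -> V1 (m, n) <-> V1 (K, K)).
  { assert (HK : K <= Z.abs K) by (pose proof (list_bound_nonneg l); lia).
    intros m n [Hm|Hn].
    - rewrite (Col m Hm n), <- (Col m Hm K), (Row K HK m), <- (Row K HK K); reflexivity.
    - rewrite (Row n Hn m), <- (Row n Hn K), (Col K HK n), <- (Col K HK K); reflexivity. }
  set (box := list_prod (window K) (window K)).
  assert (Box : forall m n, ~ In (m, n) box -> K <= Z.abs m \/ K <= Z.abs n).
  { intros m n Hmn; apply NNPP; intro H; apply Hmn, in_prod; apply in_window; lia. }
  destruct (classic (V1 (K, K))) as [HV|HV].
  - destruct (I2 box) as [[m n] [Hc Hnot]]; apply Hc, (Outside m n (Box m n Hnot)), HV.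
  - destruct (I1 box) as [[m n] [Hc Hnot]]; apply HV, (Outside m n (Box m n Hnot)), Hc.
Qed.

Theorem propositionA1 (V1 : pt -> Prop) :
  infinite_set V1 -> connected_set V1 ->
  infinite_set (compl V1) -> connected_set (compl V1) ->
  (forall u w, dual_endpoints V1 u -> dual_endpoints V1 w ->
     reach (dual_boundary V1) u w) /\
  infinite_set (dual_endpoints V1) /\
  (forall u, dual_endpoints V1 u -> degree_two (dual_boundary V1) u).
Proof.
  intros I1 C1 I2 C2; split; [|split].
  - intros u w; exact (reach_dual_endpoint V1 u w C1 C2).
  - exact (dual_endpoints_infinite V1 I1 I2).
  - intro u; exact (dual_boundary_degree_two V1 u C1 C2).
Qed.
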